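(* Let $\psi\in\mathbb C^n$ with $\|\psi\|=1$, $\hbar>0$, $H$ an $n\times n$ Hermitian matrix and $\xi$ an $n\times n$ skew-Hermitian matrix. Then $$[\,i\hbar\xi-H,\ \psi\psi^\dagger\,]=0$$ holds if and only if there exists a skew-Hermitian matrix $\kappa$ such that $$\xi+i\hbar^{-1}H=\{\mathbf 1-2\psi\psi^\dagger,\kappa\}.$$ Moreover, in that case $\xi\psi=-i\hbar^{-1}H\psi-2(\psi^\dagger\kappa\psi)\psi$, where $-2i\hbar\,\psi^\dagger\kappa\psi$ is real; hence if $\psi(t)$ satisfies $\dot\psi=\xi\psi$ with such $\xi(t),\kappa(t)$, then $i\hbar\dot\psi=H\psi+\alpha\psi$ with the real function $\alpha(t)=-2i\hbar\,\psi^\dagger\kappa\psi$.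
   Context: $\{A,B\}=AB+BA$ denotes the anticommutator and $[A,B]=AB-BA$ the commutator; $\mathbf 1$ is the identity matrix. *)

(* Complex scalars: an arbitrary numClosedFieldType C
   (e.g. algC), which has 'i and conjugation Num.conj. *)
From HB Require Import structures.
From mathcomp Require Import all_boot all_order all_algebra.
Set Implicit Arguments. Unset Strict Implicit. Unset Printing Implicit Defensive.
Import Order.TTheory GRing.Theory Num.Theory.
Local Open Scope ring_scope.

Definition adjmx (C : numClosedFieldType) (m n : nat) (A : 'M[C]_(m, n)) : 'M[C]_(n, m) :=
  (map_mx Num.conj A)^T.

Definition is_hermitian (C : numClosedFieldType) (n : nat) (A : 'M[C]_n) : Prop :=
  adjmx A = A.

Definition is_skew_hermitian (C : numClosedFieldType) (n : nat) (A : 'M[C]_n) : Prop :=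
  adjmx A = - A.

Definition commmx (C : numClosedFieldType) (n : nat) (A B : 'M[C]_n) : 'M[C]_n :=
  A *m B - B *m A.
Definition acommmx (C : numClosedFieldType) (n : nat) (A B : 'M[C]_n) : 'M[C]_n :=
  A *m B + B *m A.

Definition cdot (C : numClosedFieldType) (n : nat) (u v : 'cV[C]_n) : C :=
  (adjmx u *m v) ord0 ord0.

From HB Require Import structures.
From mathcomp Require Import all_boot all_order all_algebra.
From mathcomp Require Import ring.
Set Implicit Arguments. Unset Strict Implicit. Unset Printing Implicit Defensive.
Import Order.TTheory GRing.Theory Num.Theory.
Local Open Scope ring_scope.

(* With P = psi psi^dagger an orthogonal projection, Q = 1 - 2P is a Hermitian
   involution, and [Q, M] = 2 [M, P].  Writing M = xi + i/hbar H, which is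
   skew-Hermitian and satisfies i hbar M = i hbar xi - H, the condition
   [i hbar xi - H, P] = 0 becomes [Q, M] = 0.  For an involution Q, a matrix
   commutes with Q exactly when it is an anticommutator {Q, kappa}: one way
   take kappa = Q M / 2, the other way Q {Q, kappa} Q = {Q, kappa}.  Finally
   Q psi = -psi gives {Q, kappa} psi = -2 (psi^dagger kappa psi) psi, and
   psi^dagger kappa psi is purely imaginary when kappa is skew-Hermitian. *)

Section Adjoint.
Variable C : numClosedFieldType.

Lemma adjmxM m n p (A : 'M[C]_(m, n)) (B : 'M[C]_(n, p)) :
  adjmx (A *m B) = adjmx B *m adjmx A.
Proof. by rewrite /adjmx map_mxM trmx_mul. Qed.

Lemma adjmxD m n (A B : 'M[C]_(m, n)) : adjmx (A + B) = adjmx A + adjmx B.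
Proof. by rewrite /adjmx map_mxD linearD. Qed.

Lemma adjmxN m n (A : 'M[C]_(m, n)) : adjmx (- A) = - adjmx A.
Proof. by rewrite /adjmx map_mxN linearN. Qed.

Lemma adjmxB m n (A B : 'M[C]_(m, n)) : adjmx (A - B) = adjmx A - adjmx B.
Proof. by rewrite adjmxD adjmxN. Qed.

Lemma adjmxZ m n a (A : 'M[C]_(m, n)) : adjmx (a *: A) = a^* *: adjmx A.
Proof. by rewrite /adjmx map_mxZ linearZ. Qed.

Lemma adjmx1 n : adjmx (1%:M : 'M[C]_n) = 1%:M.
Proof. by rewrite /adjmx map_mx1 trmx1. Qed.

Lemma adjmxK m n (A : 'M[C]_(m, n)) : adjmx (adjmx A) = A.
Proof. by apply/matrixP=> i j; rewrite /adjmx !mxE conjCK. Qed.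

Lemma adjmx_mul_cdot n (u v : 'cV[C]_n) : adjmx u *m v = (cdot u v)%:M.
Proof. exact: mx11_scalar. Qed.

Lemma conj_cdot n (u v : 'cV[C]_n) : (cdot u v)^* = cdot v u.
Proof.
rewrite /cdot /adjmx !mxE rmorph_sum; apply: eq_bigr => i _.
by rewrite !mxE rmorphM /= conjCK mulrC.
Qed.

Lemma cdot_skew_conj n (u : 'cV[C]_n) (K : 'M[C]_n) :
  is_skew_hermitian K -> (cdot u (K *m u))^* = - cdot u (K *m u).
Proof.
move=> hK; rewrite conj_cdot /cdot adjmxM hK mulmxN mulNmx -mulmxA.
by rewrite [in LHS]mxE.
Qed.

End Adjoint.

Section Commutator.
Variables (C : numClosedFieldType) (n : nat).
Implicit Types (A B M P Q K : 'M[C]_n).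

Lemma commmx_eq0 A B : commmx A B = 0 <-> A *m B = B *m A.
Proof. by rewrite /commmx; split=> [/eqP | ->]; [rewrite subr_eq0 => /eqP | rewrite subrr]. Qed.

Lemma scalemx_eq0 a A : a != 0 -> a *: A = 0 <-> A = 0.
Proof.
by move=> ha; split=> [/eqP | ->]; [rewrite scaler_eq0 (negbTE ha) => /eqP | rewrite scaler0].
Qed.

Lemma commmxZl a A B : commmx (a *: A) B = a *: commmx A B.
Proof. by rewrite /commmx -scalemxAl -scalemxAr scalerBr. Qed.

Lemma commmx_reflection P M : commmx (1%:M - 2 *: P) M = 2 *: commmx M P.
Proof.
rewrite /commmx mulmxBl mul1mx mulmxBr mulmx1 -scalemxAl -scalemxAr.
by rewrite scalerBr opprB addrC addrA addrNK.
Qed.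

Lemma reflection_invol P : P *m P = P -> (1%:M - 2 *: P) *m (1%:M - 2 *: P) = 1%:M.
Proof.
move=> hPP; rewrite mulmxBl mul1mx mulmxBr mulmx1 -scalemxAl -scalemxAr scalerA hPP.
have -> : (2 * 2 : C) = 2 + 2 by ring.
by rewrite [(2 + 2) *: _]scalerDl opprB addrK subrK.
Qed.

Lemma reflection_hermitian P : is_hermitian P -> is_hermitian (1%:M - 2 *: P).
Proof. by move=> hP; rewrite /is_hermitian adjmxB adjmx1 adjmxZ hP rmorph_nat. Qed.

Lemma commmx_acommmx_invol Q K : Q *m Q = 1%:M -> commmx Q (acommmx Q K) = 0.
Proof.
move=> hQQ; apply/commmx_eq0.
by rewrite /acommmx mulmxDr mulmxDl !mulmxA hQQ mul1mx -!mulmxA hQQ mulmx1 addrC.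
Qed.

Lemma acommmx_invol_half Q M :
  Q *m Q = 1%:M -> commmx Q M = 0 -> acommmx Q (2^-1 *: (Q *m M)) = M.
Proof.
move=> hQQ /commmx_eq0 hQM.
rewrite /acommmx -scalemxAr -scalemxAl mulmxA hQQ mul1mx hQM -mulmxA hQQ mulmx1.
by rewrite -scalerDl -[2^-1]mul1r -splitr scale1r.
Qed.

Lemma commmx_invol_acommmxP Q M :
  is_hermitian Q -> Q *m Q = 1%:M -> is_skew_hermitian M ->
  commmx Q M = 0 <-> exists K, is_skew_hermitian K /\ M = acommmx Q K.
Proof.
move=> hQ hQQ hM; split=> [hQM | [K [_ ->]]]; last exact: commmx_acommmx_invol.
exists (2^-1 *: (Q *m M)); split; last by rewrite acommmx_invol_half.
rewrite /is_skew_hermitian adjmxZ adjmxM hM hQ mulNmx fmorphV rmorph_nat.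
by move/commmx_eq0: hQM => ->; rewrite scalerN.
Qed.

End Commutator.

Section RankOneProjection.
Variables (C : numClosedFieldType) (n : nat) (psi : 'cV[C]_n).
Hypothesis hpsi : cdot psi psi = 1.
Let P := psi *m adjmx psi.

Lemma rank1_proj_hermitian : is_hermitian P.
Proof. by rewrite /is_hermitian /P adjmxM adjmxK. Qed.

Lemma rank1_projv : P *m psi = psi.
Proof. by rewrite /P -mulmxA adjmx_mul_cdot hpsi mulmx1. Qed.

Lemma rank1_proj_idem : P *m P = P.
Proof. by rewrite {2}/P mulmxA rank1_projv. Qed.

Lemma rank1_reflectionv : (1%:M - 2 *: P) *m psi = - psi.
Proof.
rewrite mulmxBl mul1mx -scalemxAl rank1_projv -{1}[psi]scale1r -scalerBl.
by rewrite -[1 - 2]opprB addrK scaleN1r.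
Qed.

Lemma acommmx_rank1_reflectionv K :
  acommmx (1%:M - 2 *: P) K *m psi = - (2 * cdot psi (K *m psi)) *: psi.
Proof.
rewrite /acommmx mulmxDl -!mulmxA rank1_reflectionv mulmxN mulmxBl mul1mx.
rewrite -scalemxAl /P -mulmxA adjmx_mul_cdot mul_mx_scalar.
by rewrite scalerA addrC addKr scaleNr.
Qed.

End RankOneProjection.

Lemma mulCi_divCi (C : numClosedFieldType) (h : C) : h != 0 -> 'i * h * ('i / h) = -1.
Proof. by move=> h0; rewrite mulrACA -expr2 sqrCi mulfV ?mulr1. Qed.

Section Generator.
Variables (C : numClosedFieldType) (n : nat) (hbar : C) (H xi : 'M[C]_n).
Hypotheses (hhbar : 0 < hbar) (hH : is_hermitian H) (hxi : is_skew_hermitian xi).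

Lemma generator_skew_hermitian : is_skew_hermitian (xi + ('i / hbar) *: H).
Proof.
have hhr : hbar^* = hbar by apply/CrealP/gtr0_real.
rewrite /is_skew_hermitian adjmxD adjmxZ hxi hH rmorphM /= conjCi fmorphV /= hhr.
by rewrite opprD mulNr scaleNr.
Qed.

Lemma scale_generator : 'i * hbar *: xi - H = ('i * hbar) *: (xi + ('i / hbar) *: H).
Proof. by rewrite scalerDr scalerA mulCi_divCi ?gt_eqF // scaleN1r. Qed.

End Generator.

Theorem mainTheorem3 (C : numClosedFieldType) (n : nat)
    (psi : 'cV[C]_n) (hbar : C) (H xi : 'M[C]_n)
    (hpsi : cdot psi psi = 1) (hhbar : 0 < hbar)
    (hH : is_hermitian H) (hxi : is_skew_hermitian xi) :
  let P := mulmx psi (adjmx psi) in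
  (commmx ('i * hbar *: xi - H) P = 0 <->
     exists kappa : 'M[C]_n, is_skew_hermitian kappa /\
       xi + ('i / hbar) *: H = acommmx (1%:M - 2 *: P) kappa)
  /\
  (forall kappa : 'M[C]_n, is_skew_hermitian kappa ->
     xi + ('i / hbar) *: H = acommmx (1%:M - 2 *: P) kappa ->
     let alpha := - 2 * 'i * hbar * cdot psi (kappa *m psi) in
     xi *m psi = - ('i / hbar) *: (H *m psi) - (2 * cdot psi (kappa *m psi)) *: psi
     /\ alpha \is Num.real
     /\ (forall dpsi : 'cV[C]_n, dpsi = xi *m psi ->
           'i * hbar *: dpsi = H *m psi + alpha *: psi)).
Proof.
move=> P; set M := xi + ('i / hbar) *: H.
have hQ := reflection_hermitian (rank1_proj_hermitian psi).
have hQQ := reflection_invol (rank1_proj_idem hpsi).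
split.
  rewrite -(commmx_invol_acommmxP hQ hQQ (generator_skew_hermitian hhbar hH hxi)).
  rewrite scale_generator // commmxZl commmx_reflection.
  by rewrite !scalemx_eq0 ?mulf_neq0 ?neq0Ci ?gt_eqF ?pnatr_eq0.
move=> K hK hM alpha; set c := cdot psi (K *m psi).
have hxipsi : xi *m psi = - ('i / hbar) *: (H *m psi) - (2 * c) *: psi.
  have := acommmx_rank1_reflectionv hpsi K; rewrite -hM /M mulmxDl -scalemxAl.
  by move/(canRL (addrK _)) => ->; rewrite scaleNr addrC scaleNr.
split=> //; split.
  rewrite CrealE /alpha; apply/eqP.
  rewrite !rmorphM /= rmorphN /= rmorph_nat conjCi (CrealP (gtr0_real hhbar)).
  by rewrite cdot_skew_conj // !(mulrN, mulNr) !opprK.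
move=> dpsi ->; rewrite hxipsi scalerBr !scalerA mulrN mulCi_divCi ?gt_eqF // opprK.
by rewrite scale1r -scaleNr; congr (_ + _ *: _); rewrite /alpha -/c; clearbody c; ring.
Qed.
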